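(* There exist absolute constants $\bar\epsilon>0$ and $\delta>0$ such that for all real numbers $a,c$ and $b\ge 0$ satisfying $|ac|\le\bar\epsilon\,b^2$ and $|c|\le\bar\epsilon\,b^{3/2}$ one has $$\det S\ \ge\ \delta\, b^2(a^2+b),\qquad S=\frac13\begin{pmatrix}3&2a&-b\\ 2a&2(a^2+b)&-ab-3c\\ -b&-ab-3c&b^2-2ac\end{pmatrix}.$$ *)

From Stdlib Require Import Reals.
Open Scope R_scope.

Definition mat3 := nat -> nat -> R.

Definition det3 (M : mat3) : R :=
    M 0%nat 0%nat * M 1%nat 1%nat * M 2%nat 2%nat
  + M 0%nat 1%nat * M 1%nat 2%nat * M 2%nat 0%nat
  + M 0%nat 2%nat * M 1%nat 0%nat * M 2%nat 1%nat
  - M 0%nat 2%nat * M 1%nat 1%nat * M 2%nat 0%nat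
  - M 0%nat 1%nat * M 1%nat 0%nat * M 2%nat 2%nat
  - M 0%nat 0%nat * M 1%nat 2%nat * M 2%nat 1%nat.

Local Open Scope nat_scope.
Local Open Scope R_scope.
Definition Smat (a b c : R) : mat3 := fun i j =>
  / 3 *
  match i, j with
  | 0, 0 => 3
  | 0, 1 | 1, 0 => 2 * a
  | 0, 2 | 2, 0 => - b
  | 1, 1 => 2 * (a ^ 2 + b)
  | 1, 2 | 2, 1 => - (a * b) - 3 * c
  | 2, 2 => b ^ 2 - 2 * a * c
  | _, _ => 0
  end.

(* The determinant of S is, up to the factor 1/27, the quartic form
   a^2 b^2 + 4 b^3 - 4 a^2 (ac) - 18 b (ac) - 27 c^2.  Its first two terms are
   comparable to b^2 (a^2 + b), while under the hypotheses the three others are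
   bounded by multiples of eps a^2 b^2 and eps b^3, so for small eps they are absorbed. *)

From Stdlib Require Import Reals Lra Psatz.
Open Scope R_scope.

Lemma det3_Smat (a b c : R) :
  det3 (Smat a b c) =
  (a ^ 2 * b ^ 2 + 4 * b ^ 3 - 4 * a ^ 2 * (a * c) - 18 * b * (a * c)
   - 27 * c ^ 2) / 27.
Proof. unfold det3, Smat; simpl; field. Qed.

Lemma sqr_le_of_Rabs_le_mult_sqrt (eps b c : R) :
  0 <= b -> Rabs c <= eps * (b * sqrt b) -> c ^ 2 <= eps ^ 2 * b ^ 3.
Proof.
  intros hb hc.
  assert (hsqrt : sqrt b * sqrt b = b) by (apply sqrt_sqrt; lra).
  assert (hc_abs : c ^ 2 = Rabs c * Rabs c).
  { rewrite <- Rabs_mult, Rabs_right; [ring | nra]. }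
  assert (hc_sq : Rabs c * Rabs c <= (eps * (b * sqrt b)) * (eps * (b * sqrt b))).
  { pose proof (Rabs_pos c); apply Rmult_le_compat; lra. }
  replace (eps ^ 2 * b ^ 3) with (eps ^ 2 * b ^ 2 * (sqrt b * sqrt b))
    by (rewrite hsqrt; ring).
  nra.
Qed.

Lemma det_form_lower_bound (eps a b c : R) :
  0 <= b -> Rabs (a * c) <= eps * b ^ 2 -> c ^ 2 <= eps ^ 2 * b ^ 3 ->
  (1 - 4 * eps) * a ^ 2 * b ^ 2 + (4 - 18 * eps - 27 * eps ^ 2) * b ^ 3
  <= a ^ 2 * b ^ 2 + 4 * b ^ 3 - 4 * a ^ 2 * (a * c) - 18 * b * (a * c)
     - 27 * c ^ 2.
Proof.
  intros hb hac hc.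
  pose proof (Rle_abs (a * c)).
  assert (ha2 : 0 <= a ^ 2 * (eps * b ^ 2 - a * c)) by (apply Rmult_le_pos; nra).
  assert (hb1 : 0 <= b * (eps * b ^ 2 - a * c)) by (apply Rmult_le_pos; nra).
  nra.
Qed.

Theorem mainTheorem3 :
  exists eps delta : R, 0 < eps /\ 0 < delta /\
    forall a b c : R, 0 <= b ->
      Rabs (a * c) <= eps * b ^ 2 ->
      Rabs c <= eps * (b * sqrt b) ->
      det3 (Smat a b c) >= delta * b ^ 2 * (a ^ 2 + b).
Proof.
  exists (1 / 100), (1 / 54); split; [lra | split; [lra |]].
  intros a b c hb hac hc.
  pose proof (det_form_lower_bound (1 / 100) a b c hb hac
                (sqr_le_of_Rabs_le_mult_sqrt _ _ _ hb hc)) as hform.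
  assert (ha2b2 : 0 <= a ^ 2 * b ^ 2) by nra.
  assert (hb3 : 0 <= b ^ 3) by (apply pow_le; lra).
  rewrite det3_Smat.
  lra.
Qed.
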